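(* If $\mathcal I$ is a P-ideal on $\omega$, then $\mathfrak b_\sigma(\mathcal I)=\mathfrak b_s(\mathrm{Fin},\mathcal I,\mathcal I)=\min\{\mathfrak b,\mathrm{add}^*(\mathcal I)\}\le\mathrm{add}_\omega(\mathcal I)$.
   Context: An ideal on $\omega$ is a family $\mathcal I\subseteq\mathcal P(\omega)$ closed under finite unions and subsets, containing all finite sets, with $\omega\notin\mathcal I$; $\mathrm{Fin}$ is the ideal of finite subsets of $\omega$. $\mathcal I$ is a P-ideal if for every countable $\mathcal A\subseteq\mathcal I$ there is $B\in\mathcal I$ with $A\setminus B$ finite for all $A\in\mathcal A$. $\mathfrak b$ is the least size of a subset of $\omega^\omega$ unbounded with respect to eventual domination $\le^*$. Convention $\min\emptyset=\infty$, $\kappa<\infty$ for every cardinal. $\widehat{\mathcal P}_{\mathcal I}$ = sequences $(A_n)\in\mathcal I^\omega$ of pairwise disjoint sets; $\mathcal P_{\mathcal I}$ = those with $\bigcup_nA_n=\omega$; $\mathcal M_{\mathcal I}$ = sequences $(E_k)\in\mathcal I^\omega$ with $E_k\subseteq E_{k+1}$. $\mathfrak b_s(\mathcal I,\mathcal J,\mathcal K)=\min\{|\mathcal E|:\mathcal E\subseteq\widehat{\mathcal P}_{\mathcal K}$ and for every $(A_n)\in\mathcal P_{\mathcal J}$ there is $(E_n)\in\mathcal E$ with $\bigcup_n(A_{n+1}\cap\bigcup_{i\le n}E_i)\notin\mathcal I\}$; $\mathfrak b_\sigma(\mathcal I)=\min\{|\mathcal E|:\mathcal E\subseteq\mathcal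 M_{\mathcal I}$ and for every $(A_n)\in\mathcal M_{\mathcal I}$ there is $(E_n)\in\mathcal E$ with $E_n\not\subseteq A_n$ for infinitely many $n\}$; $\mathrm{add}_\omega(\mathcal I)=\min\{|\mathcal A|:\mathcal A\subseteq\mathcal I$ and for every $(B_n)\in\mathcal I^\omega$ there is $A\in\mathcal A$ with $A\not\subseteq B_n$ for all $n\}$; $\mathrm{add}^*(\mathcal I)=\min\{|\mathcal A|:\mathcal A\subseteq\mathcal I$ and for every $B\in\mathcal I$ there is $A\in\mathcal A$ with $A\setminus B$ infinite$\}$. *)

From mathcomp Require Import all_boot.
From mathcomp Require Import boolp classical_sets functions cardinality.
Set Implicit Arguments. Unset Strict Implicit. Unset Printing Implicit Defensive.
Local Open Scope classical_set_scope.
Local Open Scope card_scope.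

Definition is_ideal (I : set (set nat)) : Prop :=
  [/\ (forall A B, I A -> I B -> I (A `|` B)),
      (forall A B, B `<=` A -> I A -> I B),
      (forall A, finite_set A -> I A)
    & ~ I setT].

Definition Fin : set (set nat) := [set A | finite_set A].

Definition P_ideal (I : set (set nat)) : Prop :=
  forall A : nat -> set nat, (forall n, I (A n)) ->
    exists2 B, I B & forall n, finite_set (A n `\` B).

Definition le_star (f g : nat -> nat) : Prop :=
  exists N, forall n, (N <= n)%N -> (f n <= g n)%N.

Definition hatP (K : set (set nat)) (A : nat -> set nat) : Prop :=
  (forall n, K (A n)) /\ (forall n m, n <> m -> A n `&` A m = set0).
Definition Ppart (J : set (set nat)) (A : nat -> set nat) : Prop :=
  hatP J A /\ \bigcup_n A n = setT.
Definition Mseq (I : set (set nat)) (E : nat -> set nat) : Prop :=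
  (forall k, I (E k)) /\ (forall k, E k `<=` E k.+1).

(* A cardinal characteristic min{|E| : E : set T, P E}, with min of an empty
   class = infinity, is represented by its carrier type and witness property. *)
Record cchar := CChar { cc_T : Type ; cc_P : set cc_T -> Prop }.

(* min k <= min l : every l-witness is dominated in size by some k-witness
   (if l has no witness, min l = infinity and this holds trivially). *)
Definition cc_le (k l : cchar) : Prop :=
  forall F : set (cc_T l), cc_P F ->
    exists2 E : set (cc_T k), cc_P E & E #<= F.
Definition cc_eq (k l : cchar) : Prop := cc_le k l /\ cc_le l k.

(* min{k, l}: minimum over the union of both witness classes *)
Definition cc_min (k l : cchar) : cchar :=
  @CChar (cc_T k + cc_T l)%type
    (fun E => (exists2 E1 : set (cc_T k), cc_P E1 & E = inl @` E1) \/
              (exists2 E2 : set (cc_T l), cc_P E2 & E = inr @` E2)).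

Definition bfrak : cchar :=
  @CChar (nat -> nat) (fun E => ~ exists g, forall f, E f -> le_star f g).

Definition b_s (I J K : set (set nat)) : cchar :=
  @CChar (nat -> set nat) (fun E =>
    (forall e, E e -> hatP K e) /\
    forall A, Ppart J A -> exists2 e, E e &
      ~ I (\bigcup_n (A n.+1 `&` \bigcup_(i in [set i | (i <= n)%N]) e i))).

Definition b_sigma (I : set (set nat)) : cchar :=
  @CChar (nat -> set nat) (fun E =>
    (forall e, E e -> Mseq I e) /\
    forall A, Mseq I A -> exists2 e, E e &
      infinite_set [set n | ~ (e n `<=` A n)]).

Definition add_omega (I : set (set nat)) : cchar :=
  @CChar (set nat) (fun F =>
    F `<=` I /\
    forall B : nat -> set nat, (forall n, I (B n)) ->
      exists2 A, F A & forall n, ~ (A `<=` B n)).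

Definition add_star (I : set (set nat)) : cchar :=
  @CChar (set nat) (fun F =>
    F `<=` I /\
    forall B, I B -> exists2 A, F A & infinite_set (A `\` B)).

From mathcomp Require Import all_boot.
From mathcomp Require Import boolp classical_sets functions cardinality.
From mathcomp Require Import sequences.
Set Implicit Arguments. Unset Strict Implicit. Unset Printing Implicit Defensive.
Local Open Scope classical_set_scope.
Local Open Scope card_scope.
Local Open Scope nat_scope.

(* The equalities follow from the cycle
     b_sigma(I) <= min{b, add*(I)} <= b_s(Fin, I, I) <= b_sigma(I).
   Disjointifying an increasing sequence keeps its partial unions, which turns
   a b_sigma-witness into a b_s-witness.  An unbounded family of functions f
   gives the increasing sequences n |-> [0, F(n)) with F dominating f, and, I
   being a P-ideal, an add*-witness gives constant sequences.  For the middle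
   step take pseudo-unions of the members e of a b_s-witness: either they form
   an add*-witness, or a single C in I almost contains all of them, and then
   the bounds of (e_0 u ... u e_n) \ C are unbounded, since a g dominating them
   would make the partition C u [0, G_0), [G_0, G_1) \ C, [G_1, G_2) \ C, ...
   (G >= g strictly increasing) meet every e only finitely.  An
   add_omega-witness is an add*-witness because B u [0, n) is in I. *)

Lemma cc_le_trans k l m : cc_le k l -> cc_le l m -> cc_le k m.
Proof.
move=> kl lm F mF; have [E lE EF] := lm F mF; have [D kD DE] := kl E lE.
by exists D => //; exact: card_le_trans DE EF.
Qed.

Lemma cc_le_min k l m : cc_le m k -> cc_le m l -> cc_le m (cc_min k l).
Proof.
move=> mk ml F [[F1 kF1 ->]|[F2 lF2 ->]].
- have [E mE EF1] := mk F1 kF1; exists E => //.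
  by rewrite (card_le_eqr (inj_card_eq _)) // => ? ? _ _ [].
- have [E mE EF2] := ml F2 lF2; exists E => //.
  by rewrite (card_le_eqr (inj_card_eq _)) // => ? ? _ _ [].
Qed.

Lemma cc_min_le k l m :
  (forall F : set (cc_T m), cc_P F ->
     (exists2 E : set (cc_T k), cc_P E & E #<= F) \/
     (exists2 E : set (cc_T l), cc_P E & E #<= F)) ->
  cc_le (cc_min k l) m.
Proof.
move=> klm F /klm [[E kE EF]|[E lE EF]].
- by exists (inl @` E); [left; exists E|exact: card_le_trans (card_image_le _ _) EF].
- by exists (inr @` E); [right; exists E|exact: card_le_trans (card_image_le _ _) EF].
Qed.

Lemma cc_min_ler k l m : cc_le l m -> cc_le (cc_min k l) m.
Proof. by move=> lm; apply: cc_min_le => F /lm; right. Qed.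

Lemma finite_natP (A : set nat) : finite_set A <-> exists n, A `<=` `I_n.
Proof.
split=> [/finite_seqP [s ->]|[n An]]; last exact: sub_finite_set An (finite_II n).
by exists (\max_(x <- s) x).+1 => x /= xs; rewrite ltnS; exact: leq_bigmax_seq.
Qed.

Lemma finite_setN_eventually (P : nat -> Prop) :
  finite_set [set n | ~ P n] <-> exists N, forall n, N <= n -> P n.
Proof.
rewrite finite_natP; split=> [[N PN]|[N PN]]; exists N => n.
  by move=> Nn; apply: contrapT => /PN /=; rewrite ltnNge Nn.
by rewrite /= ltnNge => nPn; apply/negP => /PN.
Qed.

(* Junk value [0] on infinite sets. *)
Definition nat_bound (A : set nat) : nat := xget 0 [set n | A `<=` `I_n].

Lemma nat_boundP (A : set nat) : finite_set A -> A `<=` `I_(nat_bound A).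
Proof. by move=> /finite_natP; exact: xgetPex. Qed.

Lemma strict_incr_locate (G : nat -> nat) : {homo G : m n / m < n} ->
  forall x, x < G 0 \/ exists n, G n <= x < G n.+1.
Proof.
move=> Ginc x; have idG n : n <= G n.
  by elim: n => // n IH; exact: leq_ltn_trans IH (Ginc n n.+1 (ltnSn n)).
case: (ex_minnP (ex_intro (fun n => x < G n) x.+1 (idG _))) => -[|n] xGn minG.
  by left.
right; exists n; rewrite xGn andbT leqNgt; apply/negP => /minG.
by rewrite ltnn.
Qed.

Definition majorant (f : nat -> nat) (n : nat) : nat := \sum_(i < n.+1) (f i).+1.

Lemma majorant_gt f n : f n < majorant f n.
Proof. by rewrite /majorant big_ord_recr /= leq_addl. Qed.

Lemma majorant_ltS f n : majorant f n < majorant f n.+1.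
Proof. by rewrite [majorant f n.+1]/majorant big_ord_recr /= addnS ltnS leq_addr. Qed.

Lemma majorant_homo_lt f : {homo majorant f : m n / m < n}.
Proof. exact: homo_ltn ltn_trans (majorant_ltS f). Qed.

(* Convertible with the [\bigcup_(i in [set i | i <= n]) E i] of the definitions. *)
Definition partial_union T (E : nat -> set T) (n : nat) : set T :=
  \bigcup_(i < n.+1) E i.

Lemma partial_union_sup T (E : nat -> set T) i n :
  i <= n -> E i `<=` partial_union E n.
Proof. by move=> i_n; apply: bigcup_sup; rewrite /= ltnS. Qed.

Lemma partial_union_homo T (E : nat -> set T) :
  {homo partial_union E : m n / m <= n >-> m `<=` n}.
Proof. by move=> m n mn x [i /= im Eix]; exists i => //=; exact: leq_trans im _. Qed.

Lemma partial_union_seqDU T (E : nat -> set T) :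
  partial_union (seqDU E) = partial_union E.
Proof. by apply/funext => n; rewrite /partial_union !bigcup_mkord -bigsetU_seqDU. Qed.

Lemma partial_union_exhaust (A : nat -> set nat) : \bigcup_n A n = setT ->
  forall k, exists M, `I_k `<=` partial_union A M.
Proof.
move=> Acov; elim=> [|k [M kM]]; first by exists 0.
have [m _ Amk] : (\bigcup_n A n) k by rewrite Acov.
exists (maxn M m) => x; rewrite /= ltnS leq_eqVlt => /orP[/eqP->|xk].
  exact: partial_union_sup (leq_maxr M m) _ Amk.
exact: partial_union_homo (leq_maxl M m) _ (kM x xk).
Qed.

Definition block_partition (C : set nat) (G : nat -> nat) (n : nat) : set nat :=
  if n is m.+1 then [set x | G m <= x < G m.+1 /\ ~ C x] else C `|` `I_(G 0).

Lemma block_partition_lt C G n x : block_partition C G n x -> ~ C x -> x < G n.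
Proof. by case: n => [[]//|n [/andP[]]]. Qed.

Lemma block_partition_meet_finite C G (e : nat -> set nat) (h : nat -> nat) :
  {homo G : m n / m < n} -> (forall n, partial_union e n `\` C `<=` `I_(h n)) ->
  le_star h G ->
  finite_set (\bigcup_n (block_partition C G n.+1 `&` partial_union e n)).
Proof.
move=> /ltnW_homo Ghomo eh [N hG].
apply/finite_natP; exists (G N) => x [n _ [[/andP[Gnx xGn] nCx] enx]].
have [nN|Nn] := ltnP n N; first exact: leq_trans xGn (Ghomo _ _ nN).
by move: (leq_trans (eh n x (conj enx nCx)) (hG n Nn)); rewrite ltnNge Gnx.
Qed.

Section Ideal.
Variable I : set (set nat).
Hypothesis idI : is_ideal I.

Lemma idealU A B : I A -> I B -> I (A `|` B).
Proof. by case: idI => + _ _ _; apply. Qed.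

Lemma idealS A B : B `<=` A -> I A -> I B.
Proof. by case: idI => _ + _ _; apply. Qed.

Lemma ideal_finite A : finite_set A -> I A.
Proof. by case: idI => _ _ + _; apply. Qed.

Lemma ideal_compl B : I B -> exists x, ~ B x.
Proof.
case: idI => _ _ _ IT IB; apply/existsNP => allB; apply: IT.
by apply: idealS IB => x _; exact: allB.
Qed.

Lemma ideal_partial_union E n : (forall i, I (E i)) -> I (partial_union E n).
Proof.
move=> EI; rewrite /partial_union bigcup_mkord.
by apply: big_ind => //; [exact/ideal_finite/finite_set0|exact: idealU].
Qed.

Lemma block_partition_Ppart C G : I C -> {homo G : m n / m < n} ->
  Ppart I (block_partition C G).
Proof.
move=> IC Ginc; split; [split|].
- case=> [|n]; first exact/idealU/ideal_finite/finite_II.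
  by apply/ideal_finite/finite_natP; exists (G n.+1) => x [/andP[]].
- have disj n m : n < m -> block_partition C G n `&` block_partition C G m = set0.
    case: m => // m nm; apply/seteqP; split=> // x [].
    move=> /block_partition_lt xGn [/andP[Gmx _] nCx].
    have := leq_trans (xGn nCx) (ltnW_homo Ginc (nm : n <= m)).
    by rewrite ltnNge Gmx.
  by move=> n m /eqP; rewrite neq_ltn => /orP[/disj //|/disj]; rewrite setIC.
- apply/seteqP; split=> // x _.
  have [xG0|[n /andP[Gnx xGn]]] := strict_incr_locate Ginc x.
    by exists 0 => //; right.
  have [Cx|nCx] := pselect (C x); first by exists 0 => //; left.
  by exists n.+1 => //=; rewrite Gnx xGn.
Qed.

Lemma add_star_le_add_omega : cc_le (add_star I) (add_omega I).
Proof.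
move=> F [FI Fw]; exists F => //; split=> // B IB.
have [A FA AB] :=
  Fw (fun n => B `|` `I_n) (fun n => idealU IB (ideal_finite (finite_II n))).
exists A => // /finite_natP [n ABn]; apply: (AB n) => x Ax.
by have [Bx|nBx] := pselect (B x); [left|right; apply: ABn].
Qed.

Lemma b_sigma_le_bfrak : cc_le (b_sigma I) bfrak.
Proof.
move=> F Funb; exists ((fun f n => `I_(majorant f n)) @` F); last first.
  exact: card_image_le.
split=> [_ [f _ <-]|B [BI _]].
  split=> n; first exact/ideal_finite/finite_II.
  by move=> x /= xf; exact: ltn_trans xf (majorant_ltS f n).
have [g gB] := choice (fun n => ideal_compl (BI n)).
apply: contrapT => allfin; apply: Funb; exists g => f Ff.
have /contrapT/finite_setN_eventually [N fB] :
    ~ infinite_set [set n | ~ `I_(majorant f n) `<=` B n].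
  by move=> inf; apply: allfin; exists (fun n => `I_(majorant f n)) => //; exists f.
exists N => n /fB fBn; rewrite leqNgt; apply/negP => gf.
by apply: (gB n); apply: fBn; exact: ltn_trans gf (majorant_gt f n).
Qed.

Lemma b_s_Fin_le_b_sigma : cc_le (b_s Fin I I) (b_sigma I).
Proof.
move=> F [FM Fw]; exists (@seqDU nat @` F); last exact: card_image_le.
split=> [_ [E FE <-]|A [[AI _] Acov]].
  split=> [n|n m nm]; first exact: idealS (@subset_seqDU _ E n) ((FM E FE).1 n).
  apply/seteqP; split=> // x ex.
  by apply: nm; apply: (trivIset_seqDU E) => //; exists x.
have AM : Mseq I (partial_union A).
  by split=> [n|n]; [exact: ideal_partial_union|exact: partial_union_homo].
have [E FE Ebad] := Fw _ AM; exists (seqDU E); first by exists E.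
move=> /finite_natP [k Sk]; apply: Ebad; apply/finite_setN_eventually.
have [M kM] := partial_union_exhaust Acov k.
exists M => n Mn x Enx; have [m _ Amx] : (\bigcup_n A n) x by rewrite Acov.
have [mn|nm] := leqP m n; first exact: partial_union_sup mn _ Amx.
case: m nm Amx => // m nm Amx; apply: partial_union_homo Mn _ (kM _ (Sk x _)).
exists m => //; split=> //.
rewrite -/(partial_union (seqDU E) m) partial_union_seqDU.
exact: partial_union_sup (nm : n <= m) _ Enx.
Qed.

Section PIdeal.
Hypothesis PI : P_ideal I.

Definition pseudo_union (E : nat -> set nat) : set nat :=
  xget set0 [set B | I B /\ forall n, finite_set (E n `\` B)].

Lemma pseudo_unionP E : (forall n, I (E n)) ->
  I (pseudo_union E) /\ forall n, finite_set (E n `\` pseudo_union E).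
Proof.
move=> /PI [B IB EB].
apply: (xgetPex set0 (P := [set B | I B /\ forall n, finite_set (E n `\` B)])).
by exists B.
Qed.

Lemma finite_partial_union_setD E C n : (forall n, I (E n)) ->
  finite_set (pseudo_union E `\` C) -> finite_set (partial_union E n `\` C).
Proof.
move=> EI puC; have [_ Epu] := pseudo_unionP EI.
apply: (@sub_finite_set _ _
  (partial_union (fun i => E i `\` pseudo_union E) n `|` (pseudo_union E `\` C))).
  move=> x [[i ilt Eix] nCx].
  by have [pux|npux] := pselect (pseudo_union E x); [right|left; exists i].
rewrite finite_setU; split=> //; apply: bigcup_finite => //; exact: finite_II.
Qed.

Lemma b_sigma_le_add_star : cc_le (b_sigma I) (add_star I).
Proof.
move=> F [FI Fw]; exists ((fun A _ => A) @` F); last exact: card_image_le.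
split=> [_ [A FA <-]|B [BI _]].
  by split=> _; [exact: FI|exact: subset_refl].
have [C IC BC] := PI BI; have [A FA AC] := Fw C IC.
exists (fun _ => A); first by exists A.
move=> /finite_setN_eventually [N AB]; apply: AC.
apply: sub_finite_set (BC N) => x [Ax nCx].
by split=> //; exact: AB N (leqnn N) x Ax.
Qed.

Lemma min_bfrak_add_star_le_b_s : cc_le (cc_min bfrak (add_star I)) (b_s Fin I I).
Proof.
apply: cc_min_le => F [FP Fw].
have [[C IC puC]|noC] :=
  pselect (exists2 C, I C & forall e, F e -> finite_set (pseudo_union e `\` C)).
  left; pose h e n := nat_bound (partial_union e n `\` C).
  exists (h @` F); last exact: card_image_le.
  move=> [g hg]; have Ginc := majorant_homo_lt g.
  have [e Fe] := Fw _ (block_partition_Ppart IC Ginc); apply.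
  apply: (block_partition_meet_finite Ginc (h := h e)).
    move=> n; apply: nat_boundP.
    exact: finite_partial_union_setD (FP e Fe).1 (puC e Fe).
  have [N hN] := hg (h e) (ex_intro2 _ _ e Fe erefl).
  by exists N => n /hN /leq_trans; apply; exact/ltnW/majorant_gt.
right; exists (pseudo_union @` F); last exact: card_image_le.
split=> [_ [e Fe <-]|C IC]; first exact: (pseudo_unionP (FP e Fe).1).1.
apply: contrapT => none; apply: noC; exists C => // e Fe.
by apply: contrapT => inf; apply: none; exists (pseudo_union e) => //; exists e.
Qed.

End PIdeal.
End Ideal.

Theorem corollary5p9 (I : set (set nat)) :
  is_ideal I -> P_ideal I ->
  [/\ cc_eq (b_sigma I) (b_s Fin I I),
      cc_eq (b_s Fin I I) (cc_min bfrak (add_star I))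
    & cc_le (cc_min bfrak (add_star I)) (add_omega I)].
Proof.
move=> idI PI.
have s_sigma := b_s_Fin_le_b_sigma idI.
have sigma_min := cc_le_min (b_sigma_le_bfrak idI) (b_sigma_le_add_star PI).
have min_s := min_bfrak_add_star_le_b_s idI PI.
split; [split|split|].
- exact: cc_le_trans sigma_min min_s.
- exact: s_sigma.
- exact: cc_le_trans s_sigma sigma_min.
- exact: min_s.
- exact: cc_min_ler (add_star_le_add_omega idI).
Qed.
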